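(* Let $\mathscr G=(V,\mathfrak E)$ be a subgraph of $(\mathbb Z^d,\mathfrak E_d)$, $d\ge2$, with positive weights $(w_e)_{e\in\mathfrak E}$, and let $\mathscr C=(V_{\mathscr C},\mathfrak E_{\mathscr C})$ be a subgraph of $\mathscr G$. Let $\nu,L\in(0,\infty)$ and $B\subseteq V$ satisfy: (i) there is $\mu>0$ such that $\mathcal E^{\boldsymbol w}_{\mathscr C}(f)\ge\mu\sum_{x\in V_{\mathscr C}}f(x)^2$ for all $f:V\to\mathbb R$ with $\mathrm{supp}\,f\subseteq B$; (ii) there is an injective map $\varphi:B\setminus V_{\mathscr C}\to V_{\mathscr C}$ such that for every $x\in B\setminus V_{\mathscr C}$ there is a self-avoiding directed path $l(x,\varphi(x))$ in $\mathscr G$ from $x$ to $\varphi(x)$ all of whose edges $e$ satisfy $w_e>\nu$ and whose length satisfies $|l(x,\varphi(x))|\le L$. Then for all $f:V\to\mathbb R$ with $\mathrm{supp}\,f\subseteq B$, $$\mathcal E^{\boldsymbol w}_{\mathscr G}(f)\ge\big((2L)^{d+1}\nu^{-1}+3\mu^{-1}\big)^{-1}\sum_{x\in V}f(x)^2.$$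
   Context: For an undirected graph $\mathscr G=(V,\mathfrak E)$ with weights $\boldsymbol w=(w_e)_{e\in\mathfrak E}$ and $f:V\to\mathbb R$, the Dirichlet energy on $\mathscr G$ is $\mathcal E^{\boldsymbol w}_{\mathscr G}(f)=\frac12\sum_{x\in V}\sum_{y\in V,\{x,y\}\in\mathfrak E}w_{xy}(f(x)-f(y))^2$. $(\mathbb Z^d,\mathfrak E_d)$ is the nearest-neighbour lattice. *)

From Stdlib Require Fin.
From Stdlib Require Import Reals List ZArith.
Import ListNotations.
Open Scope R_scope.

Definition pt (d : nat) : Type := Fin.t d -> Z.

Definition lattice_adj {d : nat} (x y : pt d) : Prop :=
  exists i : Fin.t d, Z.abs (x i - y i) = 1%Z /\ (forall j, j <> i -> x j = y j).

(* A subgraph (V, E) of the nearest-neighbour lattice; E is a symmetric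
   relation representing the set of undirected edges. *)
Definition lattice_subgraph {d : nat} (V : pt d -> Prop) (E : pt d -> pt d -> Prop) : Prop :=
  (forall x y, E x y -> E y x) /\
  (forall x y, E x y -> V x /\ V y /\ lattice_adj x y).

Definition subgraph {d : nat} (V' : pt d -> Prop) (E' : pt d -> pt d -> Prop)
  (V : pt d -> Prop) (E : pt d -> pt d -> Prop) : Prop :=
  (forall x, V' x -> V x) /\
  (forall x y, E' x y -> E x y) /\
  (forall x y, E' x y -> E' y x) /\
  (forall x y, E' x y -> V' x /\ V' y).

Definition lsum {X : Type} (h : X -> R) (S : list X) : R :=
  fold_right (fun a acc => h a + acc) 0 S.

(* For nonnegative terms, sums over possibly infinite index sets take values
   in [0, +oo] and equal the supremum of finite partial sums.
   [nnsum_ge P g c Q h] expresses   sum_{P} g  >=  c * sum_{Q} h   in [0,+oo]: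
   for every finite set S of Q-indices and eps > 0 there is a finite set T of
   P-indices with c * sum_S h <= sum_T g + eps. *)
Definition nnsum_ge {X Y : Type} (P : X -> Prop) (g : X -> R) (c : R)
  (Q : Y -> Prop) (h : Y -> R) : Prop :=
  forall S : list Y, NoDup S -> Forall Q S ->
  forall eps : R, 0 < eps ->
  exists T : list X, NoDup T /\ Forall P T /\ c * lsum h S <= lsum g T + eps.

(* Dirichlet energy E^w_{(V,E)}(f) = 1/2 sum_{x in V} sum_{y, {x,y} in E}
   w_xy (f x - f y)^2 : index set of ordered pairs and the summand. *)
Definition energy_index {d : nat} (V : pt d -> Prop) (E : pt d -> pt d -> Prop)
  (p : pt d * pt d) : Prop := V (fst p) /\ E (fst p) (snd p).

Definition energy_term {d : nat} (w : pt d -> pt d -> R) (f : pt d -> R)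
  (p : pt d * pt d) : R :=
  / 2 * w (fst p) (snd p) * (f (fst p) - f (snd p)) ^ 2.

Definition sq {d : nat} (f : pt d -> R) (x : pt d) : R := f x ^ 2.

Definition supp_in {d : nat} (f : pt d -> R) (B : pt d -> Prop) : Prop :=
  forall x, f x <> 0 -> B x.

(* l = [x0; ...; xn] is a self-avoiding directed path in (V,E) from x to y
   all of whose edges have weight > nu; its length is n = length l - 1. *)
Fixpoint path_edges_ok {d : nat} (E : pt d -> pt d -> Prop) (w : pt d -> pt d -> R)
  (nu : R) (l : list (pt d)) : Prop :=
  match l with
  | a :: ((b :: _) as t) => E a b /\ nu < w a b /\ path_edges_ok E w nu t
  | _ => True
  end.

Definition good_path {d : nat} (E : pt d -> pt d -> Prop) (w : pt d -> pt d -> R)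
  (nu : R) (x y : pt d) (l : list (pt d)) : Prop :=
  head l = Some x /\ last l x = y /\ l <> [] /\ NoDup l /\ path_edges_ok E w nu l.

From Stdlib Require Fin.
From Stdlib Require Import Reals List ZArith Lra Lia Psatz Permutation FinFun.
From Stdlib Require Import ClassicalEpsilon IndefiniteDescription FunctionalExtensionality.
Import ListNotations.
Open Scope R_scope.

(* Off the core, f x is transported to f (phi x) along the path l(x, phi x): by Cauchy-Schwarz
   nu (f x - f (phi x))^2 <= L * (energy of f along the path), hence
   f x ^2 <= 2 f (phi x) ^2 + (2L/nu) * (energy along the path).
   A path of at most L lattice steps through a given edge starts in a box of side 2L around
   that edge; since distinct paths have distinct starting points, every edge carries at most
   (2L)^d of them, and the path energies add up to at most (2L)^d times the energy on G.
   What is left, the mass on the core and twice the mass at the distinct points phi x, is at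
   most three times the mass on the core, which (i) bounds by 3/mu times the energy on C. *)

Definition dec_eq {A : Type} (a b : A) : {a = b} + {a <> b} :=
  excluded_middle_informative (a = b).

Definition holds (P : Prop) : bool :=
  if excluded_middle_informative P then true else false.

Lemma holds_spec (P : Prop) : holds P = true <-> P.
Proof.
  unfold holds; destruct (excluded_middle_informative P); split; intros; try tauto; discriminate.
Qed.

Section FiniteSums.
Context {X : Type}.
Implicit Types (h : X -> R) (l : list X).

Lemma lsum_app h l1 l2 : lsum h (l1 ++ l2) = lsum h l1 + lsum h l2.
Proof. induction l1 as [|a l1 IH]; simpl; [lra|]. unfold lsum in *; simpl. rewrite IH; lra. Qed.

Lemma lsum_perm h l1 l2 : Permutation l1 l2 -> lsum h l1 = lsum h l2.
Proof. induction 1; unfold lsum in *; simpl in *; lra. Qed.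

Lemma lsum_ext h1 h2 l : (forall x, In x l -> h1 x = h2 x) -> lsum h1 l = lsum h2 l.
Proof.
  induction l as [|a l IH]; intros H; unfold lsum in *; simpl; [reflexivity|].
  rewrite (H a (or_introl eq_refl)), (IH (fun x Hx => H x (or_intror Hx))). reflexivity.
Qed.

Lemma lsum_le h1 h2 l : (forall x, In x l -> h1 x <= h2 x) -> lsum h1 l <= lsum h2 l.
Proof.
  induction l as [|a l IH]; intros H; unfold lsum in *; simpl; [lra|].
  pose proof (H a (or_introl eq_refl)). pose proof (IH (fun x Hx => H x (or_intror Hx))). lra.
Qed.

Lemma lsum_nonneg h l : (forall x, In x l -> 0 <= h x) -> 0 <= lsum h l.
Proof.
  intros H. apply Rle_trans with (lsum (fun _ => 0) l); [|now apply lsum_le].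
  clear H. induction l; unfold lsum in *; simpl; lra.
Qed.

Lemma lsum_plus h1 h2 l : lsum (fun x => h1 x + h2 x) l = lsum h1 l + lsum h2 l.
Proof. induction l; unfold lsum in *; simpl; lra. Qed.

Lemma lsum_mult_l (c : R) h l : lsum (fun x => c * h x) l = c * lsum h l.
Proof. induction l; unfold lsum in *; simpl; lra. Qed.

Lemma lsum_const (c : R) l : lsum (fun _ => c) l = INR (length l) * c.
Proof. induction l; unfold lsum in *; simpl length; rewrite ?S_INR; simpl; lra. Qed.

Lemma lsum_map {Y : Type} (h : Y -> R) (k : X -> Y) l :
  lsum h (map k l) = lsum (fun x => h (k x)) l.
Proof. induction l; unfold lsum in *; simpl; lra. Qed.

Lemma lsum_filter h (b : X -> bool) l :
  lsum h (filter b l) = lsum (fun x => if b x then h x else 0) l.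
Proof.
  induction l as [|a l IH]; [reflexivity|].
  simpl. destruct (b a); unfold lsum in *; simpl; lra.
Qed.

Lemma lsum_le_incl h (D T : list X) : NoDup D ->
  (forall x, In x D -> h x = 0 \/ In x T) -> (forall x, In x T -> 0 <= h x) ->
  lsum h D <= lsum h T.
Proof.
  intros HD. revert T. induction HD as [|a D Ha HD IH]; intros T HDT HT.
  - now apply lsum_nonneg.
  - change (lsum h (a :: D)) with (h a + lsum h D).
    destruct (HDT a (or_introl eq_refl)) as [Hz|Hin].
    + rewrite Hz, Rplus_0_l. apply IH; auto. intros x Hx; apply HDT; now right.
    + destruct (in_split a T Hin) as [T1 [T2 ->]].
      rewrite (lsum_perm h (T1 ++ a :: T2) (a :: T1 ++ T2)) by (symmetry; apply Permutation_middle).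
      apply Rplus_le_compat_l, IH.
      * intros x Hx. destruct (HDT x (or_intror Hx)) as [?|HxT]; [now left|right].
        apply in_app_or in HxT as [?|[<-|?]]; apply in_or_app; tauto.
      * intros x Hx. apply HT. apply in_app_or in Hx. apply in_or_app. simpl; tauto.
Qed.

Lemma lsum_le_nodup h (D l : list X) : NoDup D -> incl D l ->
  (forall x, In x l -> 0 <= h x) -> lsum h D <= lsum h (nodup dec_eq l).
Proof.
  intros HD Hincl Hh. apply lsum_le_incl; auto.
  - intros x Hx. right. apply nodup_In; auto.
  - intros x Hx. apply Hh, (nodup_In dec_eq); auto.
Qed.

End FiniteSums.

Lemma lsum_comm {X Y : Type} (F : X -> Y -> R) l (T : list Y) :
  lsum (fun x => lsum (F x) T) l = lsum (fun y => lsum (fun x => F x y) l) T.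
Proof.
  induction l as [|a l IH].
  - induction T; unfold lsum in *; simpl in *; lra.
  - change (lsum (F a) T + lsum (fun x => lsum (F x) T) l
            = lsum (fun y => F a y + lsum (fun x => F x y) l) T).
    rewrite IH. symmetry. apply lsum_plus.
Qed.

Lemma lsum_double_count {X Y : Type} (D : X -> list Y) (g : Y -> R) (xs : list X)
  (T : list Y) (K : nat) :
  NoDup T -> (forall p, In p T -> 0 <= g p) ->
  (forall x, In x xs -> NoDup (D x) /\ incl (D x) T) ->
  (forall p, In p T -> (length (filter (fun x => holds (In p (D x))) xs) <= K)%nat) ->
  lsum (fun x => lsum g (D x)) xs <= INR K * lsum g T.
Proof.
  intros HT Hg HD HK.
  apply Rle_trans
    with (lsum (fun p => lsum (fun x => if holds (In p (D x)) then g p else 0) xs) T).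
  - rewrite <- lsum_comm. apply Req_le, lsum_ext. intros x Hx.
    destruct (HD x Hx) as [HDx Hincl].
    rewrite <- lsum_filter. apply lsum_perm, NoDup_Permutation; auto using NoDup_filter.
    intros p. rewrite filter_In, holds_spec. split; [auto|tauto].
  - rewrite <- lsum_mult_l. apply lsum_le. intros p Hp.
    rewrite <- (lsum_filter (fun _ => g p)), lsum_const.
    apply Rmult_le_compat_r; [auto|]. apply le_INR; auto.
Qed.

Fixpoint fin_enum (n : nat) : list (Fin.t n) :=
  match n with
  | 0 => []
  | S m => Fin.F1 :: map Fin.FS (fin_enum m)
  end.

Lemma fin_enum_complete n (i : Fin.t n) : In i (fin_enum n).
Proof. induction i; simpl; [now left | right; now apply in_map]. Qed.

Lemma fin_enum_length n : length (fin_enum n) = n.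
Proof. induction n; simpl; [reflexivity|]. now rewrite length_map, IHn. Qed.

Fixpoint cart_prod {A : Type} (Js : list (list A)) : list (list A) :=
  match Js with
  | [] => [[]]
  | J :: Js' => flat_map (fun a => map (cons a) (cart_prod Js')) J
  end.

Lemma In_cart_prod {A : Type} (v : list A) (Js : list (list A)) :
  Forall2 (@In A) v Js -> In v (cart_prod Js).
Proof.
  induction 1; simpl; [now left|]. apply in_flat_map. eexists; split; [eassumption|].
  now apply in_map.
Qed.

Lemma cart_prod_length {A : Type} (Js : list (list A)) (m : nat) :
  (forall J, In J Js -> length J = m) -> length (cart_prod Js) = (m ^ length Js)%nat.
Proof.
  induction Js as [|J Js IH]; intros HJ; [reflexivity|]. simpl.
  rewrite (flat_map_constant_length (c := length (cart_prod Js))).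
  - rewrite IH, (HJ J (or_introl eq_refl)); [reflexivity|].
    intros J' HJ'. apply HJ. now right.
  - intros a _. apply length_map.
Qed.

Definition int_interval (lo : Z) (m : nat) : list Z :=
  map (fun k => (lo + Z.of_nat k)%Z) (seq 0 m).

Lemma In_int_interval lo m z : (lo <= z < lo + Z.of_nat m)%Z -> In z (int_interval lo m).
Proof.
  intros H. apply in_map_iff. exists (Z.to_nat (z - lo)). split; [lia|]. apply in_seq. lia.
Qed.

Lemma int_interval_length lo m : length (int_interval lo m) = m.
Proof. unfold int_interval. now rewrite length_map, length_seq. Qed.

Definition coords {d : nat} (x : pt d) : list Z := map x (fin_enum d).

Lemma coords_inj {d : nat} : Injective (@coords d).
Proof.
  intros x y Hxy. apply functional_extensionality. intros i.
  assert (Hi := fin_enum_complete d i). unfold coords in Hxy.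
  induction (fin_enum d) as [|j l IH]; [contradiction|].
  injection Hxy as Hj Hl. destruct Hi as [<-|Hi]; auto.
Qed.

Lemma box_card {d : nat} (lo : Fin.t d -> Z) (m : nat) (xs : list (pt d)) : NoDup xs ->
  (forall x, In x xs -> forall j, (lo j <= x j < lo j + Z.of_nat m)%Z) ->
  (length xs <= m ^ d)%nat.
Proof.
  intros Hxs Hbox.
  set (Js := map (fun j => int_interval (lo j) m) (fin_enum d)).
  assert (HJs : length (cart_prod Js) = (m ^ d)%nat).
  { rewrite (cart_prod_length _ m).
    - unfold Js. rewrite length_map, fin_enum_length. reflexivity.
    - intros J HJ. apply in_map_iff in HJ as [j [<- _]]. apply int_interval_length. }
  rewrite <- HJs, <- (length_map coords xs).
  apply NoDup_incl_length; [apply Injective_map_NoDup; [apply coords_inj | exact Hxs]|].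
  intros v Hv. apply in_map_iff in Hv as [x [<- Hx]]. apply In_cart_prod.
  clear HJs. unfold coords, Js. induction (fin_enum d) as [|j l IH]; simpl; constructor; auto.
  apply In_int_interval, Hbox, Hx.
Qed.

(* Both orientations of every path edge, matching the ordered pairs the energy sums over. *)
Fixpoint darts {A : Type} (l : list A) : list (A * A) :=
  match l with
  | a :: ((b :: _) as t) => (a, b) :: (b, a) :: darts t
  | _ => []
  end.

Lemma darts_In {A : Type} (l : list A) (p : A * A) :
  In p (darts l) -> In (fst p) l /\ In (snd p) l.
Proof.
  induction l as [|a [|b t] IH]; simpl; try tauto.
  intros [<-|[<-|Hp]]; simpl; auto. specialize (IH Hp). simpl in IH. tauto.
Qed.

Lemma NoDup_darts {A : Type} (l : list A) : NoDup l -> NoDup (darts l).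
Proof.
  induction l as [|a [|b t] IH]; intros Hl; [constructor | constructor |].
  inversion Hl as [|? ? Ha Ht]; subst.
  change (darts (a :: b :: t)) with ((a, b) :: (b, a) :: darts (b :: t)).
  constructor; [|constructor; [|now apply IH]].
  - intros [Heq|Hp]; [injection Heq as <- _; apply Ha; now left|].
    apply darts_In in Hp. simpl in *. tauto.
  - intros Hp. apply darts_In in Hp. simpl in *. tauto.
Qed.

(* Inductive step of the Cauchy-Schwarz bound nu (sum a_i)^2 <= n * sum w_i a_i^2
   along a path of n edges of weight w_i > nu. *)
Lemma sq_add_le (nu n W V u v : R) : 0 < nu -> 0 <= n -> 0 <= V ->
  nu * u ^ 2 <= W -> nu * v ^ 2 <= n * V -> nu * (u + v) ^ 2 <= (n + 1) * (W + V).
Proof.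
  intros Hnu Hn HV Hu Hv.
  assert (Hcross : 0 <= n * nu * u ^ 2 - 2 * nu * u * v + V).
  { destruct (Rle_lt_or_eq_dec 0 n Hn) as [Hn0 | <-].
    - assert (0 <= n * (n * nu * u ^ 2 - 2 * nu * u * v + V)); [|nra].
      assert (0 <= nu * (n * u - v) ^ 2) by (apply Rmult_le_pos; [lra | apply pow2_ge_0]).
      nra.
    - assert (Hv0 : Rsqr v = 0) by (unfold Rsqr; pose proof (pow2_ge_0 v); nra).
      apply Rsqr_eq_0 in Hv0. subst. lra. }
  nra.
Qed.

Lemma last_cons_default {A : Type} (z : A) (t : list A) (d1 d2 : A) :
  last (z :: t) d1 = last (z :: t) d2.
Proof. revert z; induction t as [|a t IH]; intros z; [reflexivity|]. apply IH. Qed.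

Section Paths.
Variables (d : nat) (E : pt d -> pt d -> Prop) (w : pt d -> pt d -> R) (nu : R).
Hypothesis E_sym : forall x y, E x y -> E y x.

Lemma darts_edge (l : list (pt d)) (p : pt d * pt d) :
  path_edges_ok E w nu l -> In p (darts l) -> E (fst p) (snd p).
Proof.
  induction l as [|a [|b t] IH]; simpl; try tauto.
  intros [Hab [_ Hok]] [<-|[<-|Hp]]; simpl; auto.
Qed.

Hypothesis E_adj : forall a b, E a b -> forall j, (Z.abs (a j - b j) <= 1)%Z.

Lemma darts_near_start (y : pt d) (t : list (pt d)) (p : pt d * pt d) :
  path_edges_ok E w nu (y :: t) -> In p (darts (y :: t)) ->
  exists c, (c = fst p \/ c = snd p) /\
    forall j, (Z.abs (c j - y j) < Z.of_nat (length t))%Z.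
Proof.
  revert y; induction t as [|z t IH]; intros y Hok Hp; [contradiction|].
  destruct Hok as [Hyz [_ Hok]].
  change (darts (y :: z :: t)) with ((y, z) :: (z, y) :: darts (z :: t)) in Hp.
  change (length (z :: t)) with (S (length t)).
  destruct Hp as [<-|[<-|Hp]].
  - exists y. split; [now left|]. intros j. lia.
  - exists y. split; [now right|]. intros j. lia.
  - destruct (IH z Hok Hp) as [c [Hc Hcz]]. exists c. split; [exact Hc|].
    intros j. specialize (Hcz j). specialize (E_adj y z Hyz j). lia.
Qed.

(* A path of length at most N through the dart p starts at some x with
   min p_j - N < x_j <= max p_j + N - 1 <= min p_j + N in every coordinate j
   ([darts_near_start]), i.e. in a box of side 2N. *)
Lemma paths_through_dart_card (xs : list (pt d)) (lp : pt d -> list (pt d)) (N : nat)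
  (p : pt d * pt d) : NoDup xs ->
  (forall x, In x xs -> exists t, lp x = x :: t /\ path_edges_ok E w nu (lp x) /\
                                  (length t <= N)%nat) ->
  (length (filter (fun x => holds (In p (darts (lp x)))) xs) <= (2 * N) ^ d)%nat.
Proof.
  intros Hxs Hlp.
  apply box_card with (lo := fun j => (Z.min (fst p j) (snd p j) - Z.of_nat N + 1)%Z);
    [now apply NoDup_filter|].
  intros x Hx j. apply filter_In in Hx as [Hx Hp]. rewrite holds_spec in Hp.
  destruct (Hlp x Hx) as [t [Hl [Hok Ht]]]. rewrite Hl in Hp, Hok.
  assert (Hab := E_adj _ _ (darts_edge _ _ Hok Hp) j).
  destruct (darts_near_start x t p Hok Hp) as [c [Hc Hcx]]. specialize (Hcx j).
  destruct Hc as [-> | ->]; lia.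
Qed.

Variable f : pt d -> R.
Hypothesis w_sym : forall x y, E x y -> w x y = w y x.
Hypothesis w_pos : forall x y, E x y -> 0 < w x y.

Lemma energy_term_nonneg (p : pt d * pt d) : E (fst p) (snd p) -> 0 <= energy_term w f p.
Proof.
  intros Hp. unfold energy_term.
  apply Rmult_le_pos; [apply Rmult_le_pos; [lra | now apply Rlt_le, w_pos] | apply pow2_ge_0].
Qed.

Lemma path_energy_nonneg (l : list (pt d)) :
  path_edges_ok E w nu l -> 0 <= lsum (energy_term w f) (darts l).
Proof.
  intros Hok. apply lsum_nonneg. intros p Hp. apply energy_term_nonneg, (darts_edge l); auto.
Qed.

Hypothesis nu_pos : 0 < nu.

Lemma path_sq_diff_le (y : pt d) (t : list (pt d)) : path_edges_ok E w nu (y :: t) ->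
  nu * (f y - f (last (y :: t) y)) ^ 2
    <= INR (length t) * lsum (energy_term w f) (darts (y :: t)).
Proof.
  revert y; induction t as [|z t IH]; intros y Hok.
  - simpl. rewrite Rminus_diag. lra.
  - destruct Hok as [Hyz [Hw Hok]].
    change (lsum (energy_term w f) (darts (y :: z :: t)))
      with (energy_term w f (y, z) + (energy_term w f (z, y)
            + lsum (energy_term w f) (darts (z :: t)))).
    change (last (y :: z :: t) y) with (last (z :: t) y).
    rewrite (last_cons_default z t y z).
    change (length (z :: t)) with (S (length t)). rewrite S_INR.
    replace (f y - f (last (z :: t) z)) with ((f y - f z) + (f z - f (last (z :: t) z))) by ring.
    unfold energy_term at 1 2; simpl fst; simpl snd.
    rewrite (w_sym z y (E_sym _ _ Hyz)).
    replace (/ 2 * w y z * (f y - f z) ^ 2 + (/ 2 * w y z * (f z - f y) ^ 2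
               + lsum (energy_term w f) (darts (z :: t))))
      with (w y z * (f y - f z) ^ 2 + lsum (energy_term w f) (darts (z :: t))) by field.
    apply sq_add_le; auto using pos_INR, path_energy_nonneg.
    apply Rmult_le_compat_r; [apply pow2_ge_0 | lra].
Qed.

Lemma good_path_sq_diff_le (x y : pt d) (l : list (pt d)) : good_path E w nu x y l ->
  nu * (f x - f y) ^ 2 <= INR (length l - 1) * lsum (energy_term w f) (darts l).
Proof.
  intros [Hh [Hlast [_ [_ Hok]]]]. destruct l as [|x' t]; [discriminate|].
  injection Hh as ->. rewrite <- Hlast.
  replace (length (x :: t) - 1)%nat with (length t) by (simpl; lia).
  now apply path_sq_diff_le.
Qed.

Lemma paths_energy_overlap (xs : list (pt d)) (lp : pt d -> list (pt d)) (N : nat) :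
  NoDup xs ->
  (forall x, In x xs -> exists t, lp x = x :: t /\ NoDup (lp x) /\
                          path_edges_ok E w nu (lp x) /\ (length t <= N)%nat) ->
  lsum (fun x => lsum (energy_term w f) (darts (lp x))) xs
    <= INR ((2 * N) ^ d) *
       lsum (energy_term w f) (nodup dec_eq (flat_map (fun x => darts (lp x)) xs)).
Proof.
  intros Hxs Hlp. apply lsum_double_count; [apply NoDup_nodup | | |].
  - intros p Hp. apply nodup_In, in_flat_map in Hp as [x [Hx Hp]].
    destruct (Hlp x Hx) as [t [_ [_ [Hok _]]]].
    now apply energy_term_nonneg, (darts_edge (lp x)).
  - intros x Hx. destruct (Hlp x Hx) as [t [_ [Hnd _]]]. split; [now apply NoDup_darts|].
    intros p Hp. apply nodup_In, in_flat_map. eauto.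
  - intros p _. apply paths_through_dart_card; auto.
    intros x Hx. destruct (Hlp x Hx) as [t [Hl [_ [Hok Ht]]]]. eauto.
Qed.

End Paths.

Lemma lattice_adj_coord {d : nat} (a b : pt d) :
  lattice_adj a b -> forall j, (Z.abs (a j - b j) <= 1)%Z.
Proof.
  intros [i [Hi Hother]] j.
  destruct (excluded_middle_informative (j = i)) as [->|Hji]; [lia|].
  rewrite (Hother j Hji). lia.
Qed.

Lemma nat_floor (L : R) : 0 <= L ->
  exists N : nat, INR N <= L /\ forall n : nat, INR n <= L -> (n <= N)%nat.
Proof.
  intros HL. destruct (archimed L) as [Hup Hup1].
  assert (Hpos : (0 < up L)%Z) by (apply lt_IZR; simpl; lra).
  exists (Z.to_nat (up L - 1)). split.
  - rewrite INR_IZR_INZ, Z2Nat.id, minus_IZR by lia. simpl. lra.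
  - intros n Hn. assert (Hlt : IZR (Z.of_nat n) < IZR (up L)) by (rewrite <- INR_IZR_INZ; lra).
    apply lt_IZR in Hlt. lia.
Qed.

Lemma inv_mul_le (K c s t e : R) : 0 < K -> 0 <= c <= K -> 0 <= e ->
  s <= K * t + c * e -> / K * s <= t + e.
Proof.
  intros HK Hc He Hs. apply Rmult_le_reg_l with K; [exact HK|].
  rewrite <- Rmult_assoc, Rinv_r, Rmult_1_l by lra. nra.
Qed.

Section EnergyComparison.
Variables (d : nat) (V : pt d -> Prop) (E : pt d -> pt d -> Prop) (w : pt d -> pt d -> R).
Hypothesis E_sym : forall x y, E x y -> E y x.
Hypothesis E_V : forall x y, E x y -> V x.
Hypothesis E_adj : forall a b, E a b -> forall j, (Z.abs (a j - b j) <= 1)%Z.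
Hypothesis w_sym : forall x y, E x y -> w x y = w y x.
Hypothesis w_pos : forall x y, E x y -> 0 < w x y.
Variables (VC : pt d -> Prop) (EC : pt d -> pt d -> Prop).
Hypothesis EC_E : forall x y, EC x y -> E x y.
Variables (B : pt d -> Prop) (nu L mu : R) (phi : pt d -> pt d) (lp : pt d -> list (pt d)).
Hypotheses (nu_pos : 0 < nu) (L_pos : 0 < L) (mu_pos : 0 < mu).
Hypothesis phi_inj : forall x y, B x -> ~ VC x -> B y -> ~ VC y -> phi x = phi y -> x = y.
Hypothesis phi_in : forall x, B x -> ~ VC x -> VC (phi x).
Hypothesis lp_good : forall x, B x -> ~ VC x ->
  good_path E w nu x (phi x) (lp x) /\ INR (length (lp x) - 1) <= L.
Variable f : pt d -> R.
Hypothesis f_supp : supp_in f B.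
Hypothesis core_energy_bound : nnsum_ge (energy_index VC EC) (energy_term w f) mu VC (sq f).

Lemma sq_le_transport (x : pt d) : B x -> ~ VC x ->
  sq f x <= 2 * sq f (phi x) + 2 * (L / nu) * lsum (energy_term w f) (darts (lp x)).
Proof.
  intros Hb Hv. destruct (lp_good x Hb Hv) as [Hgood Hlen].
  assert (Hpath := good_path_sq_diff_le d E w nu E_sym f w_sym w_pos nu_pos _ _ _ Hgood).
  assert (HP : 0 <= lsum (energy_term w f) (darts (lp x))).
  { apply (path_energy_nonneg d E w nu E_sym f w_pos). apply Hgood. }
  set (P := lsum (energy_term w f) (darts (lp x))) in *.
  assert (Hdiff : (f x - f (phi x)) ^ 2 <= L / nu * P).
  { apply Rmult_le_reg_l with nu; [exact nu_pos|].
    replace (nu * (L / nu * P)) with (L * P) by (field; lra).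
    apply Rle_trans with (1 := Hpath). now apply Rmult_le_compat_r. }
  unfold sq. pose proof (pow2_ge_0 (f x - 2 * f (phi x))). nra.
Qed.

Lemma transport_dart_edge (xs : list (pt d)) : (forall x, In x xs -> B x /\ ~ VC x) ->
  forall p, In p (nodup dec_eq (flat_map (fun x => darts (lp x)) xs)) -> E (fst p) (snd p).
Proof.
  intros HxsB p Hp. apply nodup_In, in_flat_map in Hp as [x [Hx Hp]].
  destruct (HxsB x Hx) as [Hb Hv]. destruct (lp_good x Hb Hv) as [[_ [_ [_ [_ Hok]]]] _].
  now apply (darts_edge d E w nu E_sym (lp x)).
Qed.

Lemma outside_core_bound (xs : list (pt d)) : NoDup xs ->
  (forall x, In x xs -> B x /\ ~ VC x) ->
  lsum (sq f) xs <= 2 * lsum (sq f) (map phi xs) + (2 * L) ^ (d + 1) * / nu *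
    lsum (energy_term w f) (nodup dec_eq (flat_map (fun x => darts (lp x)) xs)).
Proof.
  intros Hxs HxsB. destruct (nat_floor L) as [N [HNL HN]]; [lra|].
  assert (Hover := paths_energy_overlap d E w nu E_sym E_adj f w_pos xs lp N Hxs).
  lapply Hover; clear Hover; [intros Hover|].
  2: { intros x Hx. destruct (HxsB x Hx) as [Hb Hv]. destruct (lp_good x Hb Hv) as [Hgood Hlen].
       destruct Hgood as [Hh [_ [_ [Hnd Hok]]]]. destruct (lp x) as [|x' t]; [discriminate|].
       injection Hh as ->. exists t. repeat split; auto.
       apply HN in Hlen. simpl in Hlen. lia. }
  set (T := lsum _ (nodup _ _)) in *.
  assert (HT : 0 <= T).
  { apply lsum_nonneg. intros p Hp.
    now apply (energy_term_nonneg d E w f w_pos), (transport_dart_edge xs). }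
  assert (Hpow : INR ((2 * N) ^ d) <= (2 * L) ^ d).
  { rewrite pow_INR, mult_INR. apply pow_incr. pose proof (pos_INR N).
    replace (INR 2) with 2 by (simpl; lra). lra. }
  assert (Hsum : lsum (sq f) xs <= 2 * lsum (sq f) (map phi xs) +
                   2 * (L / nu) * lsum (fun x => lsum (energy_term w f) (darts (lp x))) xs).
  { rewrite lsum_map, <- !lsum_mult_l, <- lsum_plus. apply lsum_le. intros x Hx.
    destruct (HxsB x Hx). now apply sq_le_transport. }
  replace ((2 * L) ^ (d + 1) * / nu) with (2 * (L / nu) * (2 * L) ^ d)
    by (rewrite pow_add; simpl; field; lra).
  assert (HLnu : 0 <= 2 * (L / nu))
    by (apply Rmult_le_pos; [lra | apply Rlt_le, Rdiv_lt_0_compat; lra]).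
  apply Rle_trans with (1 := Hsum). apply Rplus_le_compat_l.
  rewrite (Rmult_assoc (2 * (L / nu))). apply Rmult_le_compat_l; [exact HLnu|].
  apply Rle_trans with (1 := Hover). now apply Rmult_le_compat_r.
Qed.

Lemma sq_sum_split (S : list (pt d)) : NoDup S ->
  lsum (sq f) S <= lsum (sq f) (filter (fun x => holds (VC x)) S) +
                   lsum (sq f) (filter (fun x => holds (B x /\ ~ VC x)) S).
Proof.
  intros HS. rewrite <- lsum_app. apply lsum_le_incl; [exact HS| |intros; apply pow2_ge_0].
  intros x Hx. destruct (Req_dec (f x) 0) as [Hz|Hnz].
  - left. unfold sq. rewrite Hz. ring.
  - right. apply in_or_app. rewrite !filter_In, !holds_spec.
    destruct (excluded_middle_informative (VC x)); [left | right]; auto.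
Qed.

Lemma core_sq_bound (Y xs : list (pt d)) : NoDup Y -> NoDup xs ->
  (forall x, In x xs -> B x /\ ~ VC x) ->
  lsum (sq f) Y + 2 * lsum (sq f) (map phi xs) <=
    3 * lsum (sq f) (nodup dec_eq (Y ++ map phi xs)).
Proof.
  intros HY Hxs HxsB.
  assert (Hsq : forall x, In x (Y ++ map phi xs) -> 0 <= sq f x) by (intros; apply pow2_ge_0).
  assert (Hphi : NoDup (map phi xs)).
  { apply Injective_map_NoDup_in; [|exact Hxs]. intros x y Hx Hy.
    destruct (HxsB x Hx), (HxsB y Hy). now apply phi_inj. }
  assert (HYle := lsum_le_nodup (sq f) Y _ HY (incl_appl _ (incl_refl _)) Hsq).
  assert (Hphile := lsum_le_nodup (sq f) _ _ Hphi (incl_appr _ (incl_refl _)) Hsq).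
  lra.
Qed.

Lemma edge_lists_merge (T1 T2 : list (pt d * pt d)) : NoDup T1 -> NoDup T2 ->
  (forall p, In p (T1 ++ T2) -> E (fst p) (snd p)) ->
  NoDup (nodup dec_eq (T1 ++ T2)) /\ Forall (energy_index V E) (nodup dec_eq (T1 ++ T2)) /\
  lsum (energy_term w f) T1 <= lsum (energy_term w f) (nodup dec_eq (T1 ++ T2)) /\
  lsum (energy_term w f) T2 <= lsum (energy_term w f) (nodup dec_eq (T1 ++ T2)).
Proof.
  intros HT1 HT2 HTE.
  assert (Hg : forall p, In p (T1 ++ T2) -> 0 <= energy_term w f p)
    by (intros p Hp; apply (energy_term_nonneg d E w f w_pos), HTE, Hp).
  split; [apply NoDup_nodup|split; [|split]].
  - apply Forall_forall. intros p Hp. apply nodup_In, HTE in Hp. split; [eapply E_V|]; eauto.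
  - exact (lsum_le_nodup _ T1 _ HT1 (incl_appl _ (incl_refl _)) Hg).
  - exact (lsum_le_nodup _ T2 _ HT2 (incl_appr _ (incl_refl _)) Hg).
Qed.

Lemma energy_comparison :
  nnsum_ge (energy_index V E) (energy_term w f)
    (/ ((2 * L) ^ (d + 1) * / nu + 3 * / mu)) V (sq f).
Proof.
  intros S HS _ eps Heps.
  set (Y := filter (fun x => holds (VC x)) S).
  set (X := filter (fun x => holds (B x /\ ~ VC x)) S).
  assert (HXB : forall x, In x X -> B x /\ ~ VC x).
  { intros x Hx. apply filter_In in Hx as [_ Hx]. now rewrite holds_spec in Hx. }
  assert (HY : NoDup Y) by now apply NoDup_filter.
  assert (HX : NoDup X) by now apply NoDup_filter.
  destruct (core_energy_bound (nodup dec_eq (Y ++ map phi X)) (NoDup_nodup _ _)) with eps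
    as [T1 [HT1 [HT1E Hcore]]]; [|exact Heps|].
  { apply Forall_forall. intros x Hx. apply nodup_In, in_app_or in Hx as [Hx|Hx].
    - apply filter_In in Hx as [_ Hx]. now rewrite holds_spec in Hx.
    - apply in_map_iff in Hx as [y [<- Hy]]. destruct (HXB y Hy). auto. }
  set (T2 := nodup dec_eq (flat_map (fun x => darts (lp x)) X)).
  assert (HTE : forall p, In p (T1 ++ T2) -> E (fst p) (snd p)).
  { intros p Hp. apply in_app_or in Hp as [Hp|Hp].
    - rewrite Forall_forall in HT1E. apply EC_E, (HT1E p Hp).
    - now apply (transport_dart_edge X). }
  destruct (edge_lists_merge T1 T2 HT1 (NoDup_nodup _ _) HTE) as [HT [HTV [HT1le HT2le]]].
  exists (nodup dec_eq (T1 ++ T2)). split; [exact HT|split; [exact HTV|]].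
  assert (Hsplit := sq_sum_split S HS).
  assert (Hout := outside_core_bound X HX HXB).
  assert (H3 := core_sq_bound Y X HY HX HXB).
  fold Y X T2 in Hsplit, Hout, H3.
  set (A := (2 * L) ^ (d + 1) * / nu) in *.
  assert (HA : 0 <= A)
    by (apply Rmult_le_pos; [apply pow_le | apply Rlt_le, Rinv_0_lt_compat]; lra).
  assert (Hmu : 0 < / mu) by now apply Rinv_0_lt_compat.
  apply inv_mul_le with (c := 3 * / mu); [lra | lra | lra |].
  set (t := lsum (energy_term w f) (nodup dec_eq (T1 ++ T2))) in *.
  set (s3 := lsum (sq f) (nodup dec_eq (Y ++ map phi X))) in *.
  assert (Hs3 : s3 <= / mu * (lsum (energy_term w f) T1 + eps)).
  { apply Rmult_le_reg_l with mu; [exact mu_pos|].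
    rewrite <- Rmult_assoc, Rinv_r, Rmult_1_l by lra. exact Hcore. }
  assert (A * lsum (energy_term w f) T2 <= A * t) by now apply Rmult_le_compat_l.
  assert (/ mu * lsum (energy_term w f) T1 <= / mu * t) by (apply Rmult_le_compat_l; lra).
  nra.
Qed.

End EnergyComparison.

Theorem lemma4p1 (d : nat) (hd : (2 <= d)%nat)
  (V : pt d -> Prop) (E : pt d -> pt d -> Prop)
  (hG : lattice_subgraph V E)
  (w : pt d -> pt d -> R)
  (hw_sym : forall x y, E x y -> w x y = w y x)
  (hw_pos : forall x y, E x y -> 0 < w x y)
  (VC : pt d -> Prop) (EC : pt d -> pt d -> Prop)
  (hC : subgraph VC EC V E)
  (nu L : R) (hnu : 0 < nu) (hL : 0 < L)
  (B : pt d -> Prop) (hB : forall x, B x -> V x)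
  (mu : R) (hmu : 0 < mu)
  (hi : forall f : pt d -> R, supp_in f B ->
        nnsum_ge (energy_index VC EC) (energy_term w f) mu VC (sq f))
  (phi : pt d -> pt d)
  (hphi_inj : forall x y, B x -> ~ VC x -> B y -> ~ VC y -> phi x = phi y -> x = y)
  (hphi_in : forall x, B x -> ~ VC x -> VC (phi x))
  (hpath : forall x, B x -> ~ VC x ->
           exists l : list (pt d), good_path E w nu x (phi x) l /\
             INR (length l - 1) <= L) :
  forall f : pt d -> R, supp_in f B ->
    nnsum_ge (energy_index V E) (energy_term w f)
      (/ ((2 * L) ^ (d + 1) * / nu + 3 * / mu)) V (sq f).
Proof.
  intros f hf. destruct hG as [hE_sym hE_V]. destruct hC as [_ [hEC_E _]].
  destruct (functional_choice (fun x l => B x -> ~ VC x ->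
              good_path E w nu x (phi x) l /\ INR (length l - 1) <= L)) as [lp Hlp].
  { intros x. destruct (excluded_middle_informative (B x /\ ~ VC x)) as [[Hb Hv]|Hn].
    - destruct (hpath x Hb Hv) as [l Hl]. now exists l.
    - exists []. tauto. }
  apply (energy_comparison d V E w hE_sym)
    with (VC := VC) (EC := EC) (B := B) (phi := phi) (lp := lp); auto.
  - intros x y Hxy. apply (hE_V x y Hxy).
  - intros a b Hab. apply lattice_adj_coord, (hE_V a b Hab).
Qed.
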